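(* Let $\mathbf{L}$ be an intermediate propositional logic with $\vdash_{\mathbf{L}}\lnot A\lor\lnot\lnot A$ (for all $A$). Then the first $\varepsilon\tau$-theorem holds for negated formulas in $\varepsilon\tau(\mathbf{L})$: whenever $\vdash_{\varepsilon\tau(\mathbf{L})}\lnot A(e_1,\dots,e_n)$ for $\varepsilon$- or $\tau$-terms $e_1,\dots,e_n$, there are $\varepsilon\tau$-free terms $t_i^j$ such that $\vdash_{\mathbf{L}}\lnot A(t_1^1,\dots,t_n^1)\lor\dots\lor\lnot A(t_1^k,\dots,t_n^k)$. In particular this holds for $\varepsilon\tau(\mathbf{KC})$ and $\varepsilon\tau(\mathbf{LC})$.
   Context: Intermediate propositional logic: contains intuitionistic, contained in classical propositional logic, closed under modus ponens and substitution. $\mathbf{KC}$ is intuitionistic logic plus $\lnot A\lor\lnot\lnot A$; $\mathbf{LC}$ is intuitionistic logic plus $(A\to B)\lor(B\to A)$. $\varepsilon\tau$-terms: $\varepsilon x\,A(x)$, $\tau x\,A(x)$. Critical formulas: $A(t)\to A(\varepsilon x\,A(x))$ and $A(\tau x\,A(x))\to A(t)$. $\vdash_{\varepsilon\tau(\mathbf{L})}B$: derivable in the quantifier-free first-order language with $\varepsilon\tau$-terms from critical formulas using substitution instances of theorems of $\mathbf{L}$ and modus ponens; $\vdash_{\mathbf{L}}$: the same without critical formulas. A term is $\varepsilon\tau$-free if it contains no $\varepsilon\tau$-terms. *)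

From mathcomp Require Import all_boot.
Set Implicit Arguments. Unset Strict Implicit. Unset Printing Implicit Defensive.

Inductive pform : Type :=
| PVar : nat -> pform
| PBot : pform
| PAnd : pform -> pform -> pform
| POr  : pform -> pform -> pform
| PImp : pform -> pform -> pform.

Definition PNeg (A : pform) : pform := PImp A PBot.

Fixpoint psubst (s : nat -> pform) (A : pform) : pform :=
  match A with
  | PVar n => s n
  | PBot => PBot
  | PAnd A B => PAnd (psubst s A) (psubst s B)
  | POr A B => POr (psubst s A) (psubst s B)
  | PImp A B => PImp (psubst s A) (psubst s B)
  end.

Inductive ipc_ax : pform -> Prop :=
| ipc_K  A B : ipc_ax (PImp A (PImp B A))
| ipc_S  A B C : ipc_ax (PImp (PImp A (PImp B C)) (PImp (PImp A B) (PImp A C)))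
| ipc_A1 A B : ipc_ax (PImp (PAnd A B) A)
| ipc_A2 A B : ipc_ax (PImp (PAnd A B) B)
| ipc_AI A B : ipc_ax (PImp A (PImp B (PAnd A B)))
| ipc_O1 A B : ipc_ax (PImp A (POr A B))
| ipc_O2 A B : ipc_ax (PImp B (POr A B))
| ipc_OE A B C : ipc_ax (PImp (PImp A C) (PImp (PImp B C) (PImp (POr A B) C)))
| ipc_EF A : ipc_ax (PImp PBot A).

Inductive hilbert (Ax : pform -> Prop) : pform -> Prop :=
| h_ipc A : ipc_ax A -> hilbert Ax A
| h_ax A : Ax A -> hilbert Ax A
| h_mp A B : hilbert Ax (PImp A B) -> hilbert Ax A -> hilbert Ax B.

Definition IPC : pform -> Prop := hilbert (fun _ => False).

Fixpoint peval (v : nat -> bool) (A : pform) : bool :=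
  match A with
  | PVar n => v n
  | PBot => false
  | PAnd A B => peval v A && peval v B
  | POr A B => peval v A || peval v B
  | PImp A B => peval v A ==> peval v B
  end.
Definition taut (A : pform) : Prop := forall v, peval v A.

Definition intermediate (L : pform -> Prop) : Prop :=
  [/\ (forall A, IPC A -> L A),
      (forall A, L A -> taut A),
      (forall A B, L (PImp A B) -> L A -> L B) &
      (forall s A, L A -> L (psubst s A))].

Definition KC : pform -> Prop :=
  hilbert (fun F => exists A, F = POr (PNeg A) (PNeg (PNeg A))).
Definition LC : pform -> Prop :=
  hilbert (fun F => exists A B, F = POr (PImp A B) (PImp B A)).

(* locally nameless: free variables Var x, bound variables BVar i      *)
(* (de Bruijn indices bound by Eps / Tau).                             *)
Inductive term : Type :=
| Var  : nat -> term
| BVar : nat -> term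
| Fn   : nat -> seq term -> term
| Eps  : formula -> term      (* eps x A(x), body with bound index 0 *)
| Tau  : formula -> term
with formula : Type :=
| Atom : nat -> seq term -> formula
| Bot  : formula
| And  : formula -> formula -> formula
| Or   : formula -> formula -> formula
| Imp  : formula -> formula -> formula.

Definition Neg (A : formula) : formula := Imp A Bot.

Fixpoint open_t (k : nat) (u : term) (t : term) : term :=
  match t with
  | Var x => Var x
  | BVar i => if i == k then u else BVar i
  | Fn f ts => Fn f (map (open_t k u) ts)
  | Eps A => Eps (open_f k.+1 u A)
  | Tau A => Tau (open_f k.+1 u A)
  end
with open_f (k : nat) (u : term) (A : formula) : formula :=
  match A with
  | Atom p ts => Atom p (map (open_t k u) ts)
  | Bot => Bot
  | And A B => And (open_f k u A) (open_f k u B)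
  | Or A B => Or (open_f k u A) (open_f k u B)
  | Imp A B => Imp (open_f k u A) (open_f k u B)
  end.

(* local closedness: all bound indices are below k (well-formedness at k = 0) *)
Fixpoint lc_t (k : nat) (t : term) : bool :=
  match t with
  | Var _ => true
  | BVar i => i < k
  | Fn _ ts => all (lc_t k) ts
  | Eps A => lc_f k.+1 A
  | Tau A => lc_f k.+1 A
  end
with lc_f (k : nat) (A : formula) : bool :=
  match A with
  | Atom _ ts => all (lc_t k) ts
  | Bot => true
  | And A B => lc_f k A && lc_f k B
  | Or A B => lc_f k A && lc_f k B
  | Imp A B => lc_f k A && lc_f k B
  end.

Fixpoint etfree_t (t : term) : bool :=
  match t with
  | Var _ => true
  | BVar _ => true
  | Fn _ ts => all etfree_t ts
  | Eps _ => false
  | Tau _ => false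
  end.
Fixpoint etfree_f (A : formula) : bool :=
  match A with
  | Atom _ ts => all etfree_t ts
  | Bot => true
  | And A B => etfree_f A && etfree_f B
  | Or A B => etfree_f A && etfree_f B
  | Imp A B => etfree_f A && etfree_f B
  end.

Definition is_et_term (t : term) : bool :=
  match t with Eps _ | Tau _ => true | _ => false end.

Fixpoint subst_t (s : nat -> term) (t : term) : term :=
  match t with
  | Var x => s x
  | BVar i => BVar i
  | Fn f ts => Fn f (map (subst_t s) ts)
  | Eps A => Eps (subst_f s A)
  | Tau A => Tau (subst_f s A)
  end
with subst_f (s : nat -> term) (A : formula) : formula :=
  match A with
  | Atom p ts => Atom p (map (subst_t s) ts)
  | Bot => Bot
  | And A B => And (subst_f s A) (subst_f s B)
  | Or A B => Or (subst_f s A) (subst_f s B)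
  | Imp A B => Imp (subst_f s A) (subst_f s B)
  end.

Definition sub_list (xs : seq nat) (ts : seq term) : nat -> term :=
  fun x => if x \in xs then nth (Var x) ts (index x xs) else Var x.

Fixpoint inst (s : nat -> formula) (A : pform) : formula :=
  match A with
  | PVar n => s n
  | PBot => Bot
  | PAnd A B => And (inst s A) (inst s B)
  | POr A B => Or (inst s A) (inst s B)
  | PImp A B => Imp (inst s A) (inst s B)
  end.

(* Derivability.  crit = true : |-_{et(L)} (with critical formulas);
   crit = false : |-_L (without critical formulas). *)
Inductive prov (L : pform -> Prop) (crit : bool) : formula -> Prop :=
| pr_inst (s : nat -> formula) (A : pform) :
    L A -> (forall n, lc_f 0 (s n)) -> prov L crit (inst s A)
| pr_crit_eps (B : formula) (t : term) :
    crit -> lc_f 1 B -> lc_t 0 t ->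
    prov L crit (Imp (open_f 0 t B) (open_f 0 (Eps B) B))
| pr_crit_tau (B : formula) (t : term) :
    crit -> lc_f 1 B -> lc_t 0 t ->
    prov L crit (Imp (open_f 0 (Tau B) B) (open_f 0 t B))
| pr_mp (A B : formula) :
    prov L crit (Imp A B) -> prov L crit A -> prov L crit B.

Fixpoint bigOr (Fs : seq formula) : formula :=
  match Fs with
  | [::] => Bot
  | [:: F] => F
  | F :: Fs' => Or F (bigOr Fs')
  end.

Definition first_et_thm_neg (L : pform -> Prop) : Prop :=
  forall (A : formula) (xs : seq nat) (es : seq term),
    etfree_f A -> lc_f 0 A -> uniq xs -> size es = size xs ->
    all is_et_term es -> all (lc_t 0) es ->
    prov L true (Neg (subst_f (sub_list xs es) A)) ->
    exists tss : seq (seq term),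
      0 < size tss /\
      all (fun ts => (size ts == size xs) && all etfree_t ts && all (lc_t 0) ts) tss /\
      prov L false (bigOr [seq Neg (subst_f (sub_list xs ts) A) | ts <- tss]).

(* Suppose no disjunction ~A(t^1) \/ ... \/ ~A(t^k) of epsilon-tau-free
   instances is provable in L.  Then every finite set of instances A(t) is
   satisfied by some valuation of the atoms: otherwise the disjunction of their
   negations is a classical tautology, and in a logic proving ~B \/ ~~B every
   tautology ~B_1 \/ ... \/ ~B_k is provable (Glivenko's theorem puts
   ~(B_1 /\ ... /\ B_k) into L, and weak excluded middle splits it).  By
   compactness a single valuation V satisfies all instances.  Now interpret
   terms in the Herbrand universe of closed epsilon-tau-free terms, letting
   eps x B denote a witness and tau x B a counterexample of B: every critical
   formula, hence every epsilon-tau(L)-theorem, is true, so ~A(e_1,...,e_n) is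
   true; but it is ~A(t) for the values t of the e_i, which V refutes. *)

From HB Require Import structures.
From mathcomp Require Import all_boot boolp classical_sets.
Set Implicit Arguments. Unset Strict Implicit. Unset Printing Implicit Defensive.

Fixpoint pbigOr (Ps : seq pform) : pform :=
  match Ps with [::] => PBot | [:: P] => P | P :: Ps' => POr P (pbigOr Ps') end.

Fixpoint pconj (Ps : seq pform) : pform :=
  match Ps with [::] => PNeg PBot | [:: P] => P | P :: Ps' => PAnd P (pconj Ps') end.

Lemma peval_pbigOr v Ps : peval v (pbigOr Ps) = has (peval v) Ps.
Proof. by elim: Ps => [|P [|Q Ps] IH] //=; rewrite ?orbF // IH. Qed.

Lemma peval_pconj v Ps : peval v (pconj Ps) = all (peval v) Ps.
Proof. by elim: Ps => [|P [|Q Ps] IH] //=; rewrite ?andbT // IH. Qed.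

Fixpoint maxvar (A : pform) : nat :=
  match A with
  | PVar n => n.+1
  | PBot => 0
  | PAnd A B | POr A B | PImp A B => maxn (maxvar A) (maxvar B)
  end.

Section Derivations.
Variable L : pform -> Prop.
Hypothesis L_IPC : forall A, IPC A -> L A.
Hypothesis L_MP : forall A B, L (PImp A B) -> L A -> L B.

Lemma L_ax A : ipc_ax A -> L A.
Proof. by move=> ax; apply/L_IPC/h_ipc. Qed.

Lemma L_id A : L (PImp A A).
Proof.
apply: (L_MP (A := PImp A (PImp A A))); last exact/L_ax/ipc_K.
apply: (L_MP (A := PImp A (PImp (PImp A A) A))); last exact/L_ax/ipc_K.
exact/L_ax/ipc_S.
Qed.

(* [derives G B] is [G |- B] encoded as [L] proving [B] under the hypotheses
   of [G] turned into premises, the head of [G] innermost: the deduction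
   theorem then holds by definition. *)
Fixpoint imps (G : seq pform) (B : pform) : pform :=
  if G is A :: G' then imps G' (PImp A B) else B.

Definition derives G B := L (imps G B).

Lemma derives_impI G A B : derives (A :: G) B -> derives G (PImp A B).
Proof. by []. Qed.

Lemma derives_of_L G B : L B -> derives G B.
Proof.
elim: G B => [//|C G IH] B LB; apply: IH.
by apply: L_MP LB; apply/L_ax/ipc_K.
Qed.

Lemma derives_mono G P Q : L (PImp P Q) -> derives G P -> derives G Q.
Proof.
elim: G P Q => [|C G IH] P Q LPQ /=; first exact: L_MP.
apply: IH; apply: L_MP; first exact/L_ax/ipc_S.
by apply: L_MP LPQ; apply/L_ax/ipc_K.
Qed.

Lemma derives_MP G A B : derives G (PImp A B) -> derives G A -> derives G B.
Proof.
elim: G A B => [|C G IH] A B; first exact: L_MP.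
move=> dAB dA; apply: IH dA; apply: (derives_mono (P := PImp C (PImp A B))) dAB.
exact/L_ax/ipc_S.
Qed.

Lemma derives_mono2 G P Q R :
  L (PImp P (PImp Q R)) -> derives G P -> derives G Q -> derives G R.
Proof. by move=> LPQR dP; apply/derives_MP/(derives_mono LPQR dP). Qed.

Lemma derives_hyp G A : derives (A :: G) A.
Proof. exact: derives_of_L (L_id A). Qed.

Lemma derives_weaken G C B : derives G B -> derives (C :: G) B.
Proof. by apply: derives_mono; apply/L_ax/ipc_K. Qed.

Lemma derives_andI G A B : derives G A -> derives G B -> derives G (PAnd A B).
Proof. by apply: derives_mono2; apply/L_ax/ipc_AI. Qed.

Lemma derives_andEl G A B : derives G (PAnd A B) -> derives G A.
Proof. by apply: derives_mono; apply/L_ax/ipc_A1. Qed.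

Lemma derives_andEr G A B : derives G (PAnd A B) -> derives G B.
Proof. by apply: derives_mono; apply/L_ax/ipc_A2. Qed.

Lemma derives_orIl G A B : derives G A -> derives G (POr A B).
Proof. by apply: derives_mono; apply/L_ax/ipc_O1. Qed.

Lemma derives_orIr G A B : derives G B -> derives G (POr A B).
Proof. by apply: derives_mono; apply/L_ax/ipc_O2. Qed.

Lemma derives_orE G A B C :
  derives G (POr A B) -> derives (A :: G) C -> derives (B :: G) C -> derives G C.
Proof.
move=> dAB dAC dBC; apply: derives_MP dAB.
exact: derives_mono2 (L_ax (ipc_OE A B C)) dAC dBC.
Qed.

Lemma derives_botE G A : derives G PBot -> derives G A.
Proof. by apply: derives_mono; apply/L_ax/ipc_EF. Qed.

Lemma derives_nnI G P : derives G P -> derives G (PNeg (PNeg P)).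
Proof.
by move=> dP; apply/derives_impI/(derives_MP (derives_hyp _ _))/derives_weaken.
Qed.

Lemma derives_nn_cases G p P :
  derives (p :: G) (PNeg (PNeg P)) -> derives (PNeg p :: G) (PNeg (PNeg P)) ->
  derives G (PNeg (PNeg P)).
Proof.
move=> dp dnp; apply: derives_impI.
have dnotp : derives (PNeg P :: G) (PNeg p).
  apply: derives_impI; apply: derives_MP (derives_weaken _ (derives_hyp _ _)).
  have dp' := derives_weaken (PNeg P) (derives_impI dp).
  exact: derives_MP (derives_weaken _ dp') (derives_hyp _ _).
have dnp' := derives_weaken (PNeg P) (derives_impI dnp).
exact: derives_MP (derives_MP dnp' dnotp) (derives_hyp _ _).
Qed.

Definition lit (v : nat -> bool) i := if v i then PVar i else PNeg (PVar i).

Fixpoint lits (v : nat -> bool) n :=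
  if n is n'.+1 then lit v n' :: lits v n' else [::].

Lemma lits_ext v w n : {in gtn n, v =1 w} -> lits v n = lits w n.
Proof.
elim: n => [//|n IH] vw /=; rewrite /lit vw ?inE // IH // => i ltin.
by apply: vw; rewrite inE ltnS ltnW.
Qed.

Lemma derives_lit v n i : i < n -> derives (lits v n) (lit v i).
Proof.
elim: n => [//|n IH]; rewrite ltnS leq_eqVlt => /orP[/eqP->|ltin].
  exact: derives_hyp.
exact/derives_weaken/IH.
Qed.

Lemma kalmar v n A : maxvar A <= n ->
  derives (lits v n) (if peval v A then A else PNeg A).
Proof.
elim: A => [i||A IHA B IHB|A IHA B IHB|A IHA B IHB] /=.
- by move=> ltin; have := derives_lit v ltin; rewrite /lit.
- by move=> _; apply: derives_of_L; apply: L_id.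
all: rewrite geq_max => /andP[/IHA dA /IHB dB].
all: case: (peval v A) dA => dA; case: (peval v B) dB => dB /=.
all: try by [apply: derives_andI | apply: derives_orIl | apply: derives_orIr
            | apply/derives_impI/derives_weaken].
all: apply: derives_impI.
- by apply: derives_MP (derives_weaken _ dB) _; apply/derives_andEr/derives_hyp.
- by apply: derives_MP (derives_weaken _ dA) _; apply/derives_andEl/derives_hyp.
- by apply: derives_MP (derives_weaken _ dA) _; apply/derives_andEl/derives_hyp.
- apply: derives_orE (derives_hyp _ _) _ _.
  + exact: derives_MP (derives_weaken _ (derives_weaken _ dA)) (derives_hyp _ _).
  + exact: derives_MP (derives_weaken _ (derives_weaken _ dB)) (derives_hyp _ _).
- apply: derives_MP (derives_weaken _ dB) _.
  exact: derives_MP (derives_hyp _ _) (derives_weaken _ dA).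
- apply: derives_botE.
  exact: derives_MP (derives_weaken _ dA) (derives_hyp _ _).
Qed.

Lemma derives_lits_nn n P :
  (forall v, derives (lits v n) (PNeg (PNeg P))) -> L (PNeg (PNeg P)).
Proof.
elim: n => [|n IH] dnn; first exact: dnn xpredT.
apply: IH => v; pose v_ b i := if i == n then b else v i.
have lits_v_ b : lits (v_ b) n = lits v n.
  by apply: lits_ext => i; rewrite inE /v_ => /ltn_eqF->.
apply: (derives_nn_cases (p := PVar n)).
- by have := dnn (v_ true); rewrite /= lits_v_ /lit /v_ eqxx.
- by have := dnn (v_ false); rewrite /= lits_v_ /lit /v_ eqxx.
Qed.

Lemma glivenko P : taut P -> L (PNeg (PNeg P)).
Proof.
move=> tautP; apply: (@derives_lits_nn (maxvar P)) => v.
by apply: derives_nnI; have := kalmar v (leqnn (maxvar P)); rewrite tautP.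
Qed.

Lemma L_neg_of_tneg P : L (PNeg (PNeg (PNeg P))) -> L (PNeg P).
Proof.
move=> Ltn; apply: (@derives_impI [::]).
apply: derives_MP (derives_weaken _ (derives_of_L [::] Ltn)) _.
exact/derives_nnI/derives_hyp.
Qed.

Lemma L_wem_of_linear A :
  L (POr (PImp A (PNeg A)) (PImp (PNeg A) A)) -> L (POr (PNeg A) (PNeg (PNeg A))).
Proof.
move=> lin; apply: (@derives_orE [::] _ _ _ (derives_of_L _ lin)).
- apply/derives_orIl/derives_impI.
  apply: derives_MP (derives_hyp _ _).
  exact: derives_MP (derives_weaken _ (derives_hyp _ _)) (derives_hyp _ _).
- apply/derives_orIr/derives_impI.
  apply: derives_MP (derives_hyp _ _) _.
  exact: derives_MP (derives_weaken _ (derives_hyp _ _)) (derives_hyp _ _).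
Qed.

Section WeakExcludedMiddle.
Hypothesis L_wem : forall A, L (POr (PNeg A) (PNeg (PNeg A))).

Lemma derives_neg_pconj G Bs :
  derives G (PNeg (pconj Bs)) -> derives G (pbigOr (map PNeg Bs)).
Proof.
elim: Bs G => [|B [|C Bs] IH] G //= dn.
  exact: derives_MP dn (derives_of_L G (L_id PBot)).
apply: derives_orE (derives_of_L G (L_wem B)) _ _.
  exact/derives_orIl/derives_hyp.
apply/derives_orIr/IH/derives_impI.
apply: derives_MP (derives_weaken _ (derives_hyp _ _)) (derives_impI _).
apply: derives_MP (derives_weaken _ (derives_weaken _ (derives_weaken _ dn))) _.
exact: derives_andI (derives_hyp _ _) (derives_weaken _ (derives_hyp _ _)).
Qed.

Lemma L_taut_disj_neg Bs : taut (pbigOr (map PNeg Bs)) -> L (pbigOr (map PNeg Bs)).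
Proof.
move=> tautBs; apply: (@derives_neg_pconj [::]); apply/L_neg_of_tneg/glivenko => v.
move: (tautBs v); rewrite peval_pbigOr /= peval_pconj has_map implybF -has_predC.
by apply: sub_has => B /=; rewrite implybF.
Qed.

End WeakExcludedMiddle.
End Derivations.

Section HilbertSystems.
Variable Ax : pform -> Prop.

Lemma hilbert_IPC A : IPC A -> hilbert Ax A.
Proof. by elim=> [B|B []|B C _ hBC _ hB]; [exact: h_ipc | exact: h_mp hBC hB]. Qed.

Lemma ipc_ax_taut A : ipc_ax A -> taut A.
Proof.
move=> ax v; case: ax => * /=;
  by repeat match goal with |- context [peval ?w ?X] => case: (peval w X) end.
Qed.

Lemma hilbert_intermediate :
  (forall A, Ax A -> taut A) -> (forall s A, Ax A -> Ax (psubst s A)) ->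
  intermediate (hilbert Ax).
Proof.
move=> Ax_taut Ax_subst; split; [exact: hilbert_IPC | | exact: h_mp |].
- move=> A; elim=> [B /ipc_ax_taut|B /Ax_taut|B C _ tBC _ tB v] //.
  by move: (tBC v) (tB v) => /= /implyP.
- move=> s A; elim=> [B axB|B /(Ax_subst s) axB|B C _ hBC _ hB].
  + by apply: h_ipc; case: axB => * /=; constructor.
  + exact: h_ax.
  + exact: h_mp hBC hB.
Qed.

End HilbertSystems.

Lemma KC_intermediate : intermediate KC.
Proof.
apply: hilbert_intermediate => [_ [A ->] v /=|s _ [A ->]].
  by case: (peval v A).
by exists (psubst s A).
Qed.

Lemma LC_intermediate : intermediate LC.
Proof.
apply: hilbert_intermediate => [_ [A [B ->]] v /=|s _ [A [B ->]]].
  by case: (peval v A); case: (peval v B).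
by exists (psubst s A), (psubst s B).
Qed.

Lemma KC_wem A : KC (POr (PNeg A) (PNeg (PNeg A))).
Proof. by apply: h_ax; exists A. Qed.

Lemma LC_wem A : LC (POr (PNeg A) (PNeg (PNeg A))).
Proof.
have [LC_IPC _ LC_MP _] := LC_intermediate.
by apply: L_wem_of_linear => //; apply: h_ax; exists A, (PNeg A).
Qed.

(* Equality of terms and formulas is decided classically: it is only needed
   for list membership and for choosing witnesses. *)
HB.instance Definition _ := gen_eqMixin term.
HB.instance Definition _ := gen_eqMixin formula.
HB.instance Definition _ := gen_choiceMixin term.

Section TermFormulaInd.
Variables (Pt : term -> Prop) (Pf : formula -> Prop).
Hypotheses (HVar : forall x, Pt (Var x)) (HBVar : forall i, Pt (BVar i))
  (HFn : forall f ts, {in ts, forall t, Pt t} -> Pt (Fn f ts))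
  (HEps : forall B, Pf B -> Pt (Eps B)) (HTau : forall B, Pf B -> Pt (Tau B))
  (HAtom : forall p ts, {in ts, forall t, Pt t} -> Pf (Atom p ts)) (HBot : Pf Bot)
  (HAnd : forall A B, Pf A -> Pf B -> Pf (And A B))
  (HOr : forall A B, Pf A -> Pf B -> Pf (Or A B))
  (HImp : forall A B, Pf A -> Pf B -> Pf (Imp A B)).

Let all_Pt ts := foldr (fun t P => Pt t /\ P) True ts.

Let all_Pt_in ts : all_Pt ts -> {in ts, forall t, Pt t}.
Proof.
elim: ts => [//|u ts IH] [Pu Pts] t; rewrite inE => /orP[/eqP-> //|].
exact: IH.
Qed.

Fixpoint term_mut_ind (t : term) : Pt t :=
  match t with
  | Var x => HVar x
  | BVar i => HBVar i
  | Fn f ts => HFn f (all_Pt_in ((fix go ts : all_Pt ts :=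
       if ts is u :: us then conj (term_mut_ind u) (go us) else I) ts))
  | Eps B => HEps (formula_mut_ind B)
  | Tau B => HTau (formula_mut_ind B)
  end
with formula_mut_ind (A : formula) : Pf A :=
  match A with
  | Atom p ts => HAtom p (all_Pt_in ((fix go ts : all_Pt ts :=
       if ts is u :: us then conj (term_mut_ind u) (go us) else I) ts))
  | Bot => HBot
  | And A B => HAnd (formula_mut_ind A) (formula_mut_ind B)
  | Or A B => HOr (formula_mut_ind A) (formula_mut_ind B)
  | Imp A B => HImp (formula_mut_ind A) (formula_mut_ind B)
  end.

Lemma term_formula_ind : (forall t, Pt t) /\ (forall A, Pf A).
Proof. exact: conj term_mut_ind formula_mut_ind. Qed.

End TermFormulaInd.

Lemma lc_subst_etfree :
  (forall t s, etfree_t t -> lc_t 0 t -> (forall x, lc_t 0 (s x)) ->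
     lc_t 0 (subst_t s t)) /\
  (forall A s, etfree_f A -> lc_f 0 A -> (forall x, lc_t 0 (s x)) ->
     lc_f 0 (subst_f s A)).
Proof.
apply: term_formula_ind => //=.
- move=> f ts IH s /allP et /allP lc lcs; rewrite all_map.
  by apply/allP => t tts; apply: IH => //; [apply: et | apply: lc].
- move=> p ts IH s /allP et /allP lc lcs; rewrite all_map.
  by apply/allP => t tts; apply: IH => //; [apply: et | apply: lc].
all: by move=> A B IHA IHB s /andP[etA etB] /andP[lcA lcB] lcs; rewrite IHA ?IHB.
Qed.

Definition etfree_lc (t : term) : bool := etfree_t t && lc_t 0 t.

(* The Herbrand-style epsilon-tau model over an atom valuation [V]: terms
   denote closed epsilon-tau-free terms, free variables denote themselves,
   [eps x B] denotes a witness of [B] and [tau x B] a counterexample to [B]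
   when one exists ([Var 0] otherwise). *)
Section HerbrandModel.
Variable V : nat * seq term -> bool.

Fixpoint ev_t (env : seq term) (t : term) : term :=
  match t with
  | Var x => Var x
  | BVar i => nth (Var 0) env i
  | Fn f ts => Fn f (map (ev_t env) ts)
  | Eps B => xget (Var 0) (fun d => etfree_lc d /\ ev_f (d :: env) B)
  | Tau B => xget (Var 0) (fun d => etfree_lc d /\ ~~ ev_f (d :: env) B)
  end
with ev_f (env : seq term) (A : formula) : bool :=
  match A with
  | Atom p ts => V (p, map (ev_t env) ts)
  | Bot => false
  | And A B => ev_f env A && ev_f env B
  | Or A B => ev_f env A || ev_f env B
  | Imp A B => ev_f env A ==> ev_f env B
  end.

Fixpoint fval (A : formula) : bool :=
  match A with
  | Atom p ts => V (p, ts)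
  | Bot => false
  | And A B => fval A && fval B
  | Or A B => fval A || fval B
  | Imp A B => fval A ==> fval B
  end.

Lemma ev_env :
  (forall t env ext, lc_t (size env) t -> ev_t (env ++ ext) t = ev_t env t) /\
  (forall A env ext, lc_f (size env) A -> ev_f (env ++ ext) A = ev_f env A).
Proof.
apply: term_formula_ind => //=.
- by move=> i env ext lti; rewrite nth_cat lti.
- by move=> f ts IH env ext /allP lc; congr Fn; apply/eq_in_map => t tts; apply: IH (lc t tts).
- by move=> B IH env ext lc; congr xget; apply/funext => d; rewrite (IH (d :: env)).
- by move=> B IH env ext lc; congr xget; apply/funext => d; rewrite (IH (d :: env)).
- by move=> p ts IH env ext /allP lc; congr V; congr pair; apply/eq_in_map => t tts; apply: IH (lc t tts).
all: by move=> A B IHA IHB env ext /andP[lcA lcB]; rewrite IHA ?IHB.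
Qed.

Lemma ev_t_lc env t : lc_t 0 t -> ev_t env t = ev_t [::] t.
Proof. exact: ev_env.1 t [::] env. Qed.

Lemma ev_open :
  (forall t env u, lc_t (size env).+1 t -> lc_t 0 u ->
     ev_t env (open_t (size env) u t) = ev_t (rcons env (ev_t [::] u)) t) /\
  (forall A env u, lc_f (size env).+1 A -> lc_t 0 u ->
     ev_f env (open_f (size env) u A) = ev_f (rcons env (ev_t [::] u)) A).
Proof.
apply: term_formula_ind => //=.
- move=> i env u lti lcu; rewrite nth_rcons; case: eqP => [->|neq].
    by rewrite ltnn ev_t_lc.
  by rewrite ltn_neqAle -ltnS lti andbT; move/eqP: neq => ->.
- move=> f ts IH env u /allP lc lcu; congr Fn; rewrite -map_comp.
  by apply/eq_in_map => t tts; apply: IH (lc t tts) lcu.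
- by move=> B IH env u lc lcu; congr xget; apply/funext => d; rewrite (IH (d :: env)).
- by move=> B IH env u lc lcu; congr xget; apply/funext => d; rewrite (IH (d :: env)).
- move=> p ts IH env u /allP lc lcu; congr V; congr pair; rewrite -map_comp.
  by apply/eq_in_map => t tts; apply: IH (lc t tts) lcu.
all: by move=> A B IHA IHB env u /andP[lcA lcB] lcu; rewrite IHA ?IHB.
Qed.

Lemma ev_open0 B u : lc_f 1 B -> lc_t 0 u ->
  ev_f [::] (open_f 0 u B) = ev_f [:: ev_t [::] u] B.
Proof. exact: ev_open.2 B [::] u. Qed.

Lemma ev_subst_etfree :
  (forall t s env, etfree_t t -> lc_t 0 t -> (forall x, lc_t 0 (s x)) ->
     ev_t env (subst_t s t) = subst_t (ev_t [::] \o s) t) /\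
  (forall A s env, etfree_f A -> lc_f 0 A -> (forall x, lc_t 0 (s x)) ->
     ev_f env (subst_f s A) = fval (subst_f (ev_t [::] \o s) A)).
Proof.
apply: term_formula_ind => //=.
- by move=> x s env _ _ lcs; apply: ev_t_lc.
- move=> f ts IH s env /allP et /allP lc lcs; congr Fn; rewrite -map_comp.
  by apply/eq_in_map => t tts; apply: IH (et t tts) (lc t tts) lcs.
- move=> p ts IH s env /allP et /allP lc lcs; congr V; congr pair; rewrite -map_comp.
  by apply/eq_in_map => t tts; apply: IH (et t tts) (lc t tts) lcs.
all: by move=> A B IHA IHB s env /andP[etA etB] /andP[lcA lcB] lcs; rewrite IHA ?IHB.
Qed.

Lemma etfree_lc_ev env t : all etfree_lc env -> etfree_lc (ev_t env t).
Proof.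
move: t env; apply: (@term_mut_ind _ (fun _ => True)) => //=.
- move=> i env /all_nthP envP; case: (ltnP i (size env)) => [ltin|lein].
    exact: envP.
  by rewrite nth_default.
- move=> f ts IH env envP; rewrite /etfree_lc /= !all_map -all_predI.
  by apply/allP => t tts; apply: IH.
all: by move=> B _ env _; case: xgetP => [x _ []|].
Qed.

Lemma ev_inst env s A : ev_f env (inst s A) = peval (fun n => ev_f env (s n)) A.
Proof. by elim: A => //= A IHA B IHB; rewrite IHA IHB. Qed.

Lemma prov_sound L crit F :
  (forall A, L A -> taut A) -> prov L crit F -> ev_f [::] F.
Proof.
move=> L_taut; elim=> {F} [s A /L_taut tA _|B t _ lcB lct|B t _ lcB lct|A B _ hAB _ hA].
- by rewrite ev_inst.
- rewrite /= !ev_open0 //; apply/implyP => Bt.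
  have lcevt : etfree_lc (ev_t [::] t) by apply: etfree_lc_ev.
  by case: (xgetI (P := fun d => etfree_lc d /\ ev_f [:: d] B) (Var 0) (conj lcevt Bt)).
- rewrite /= !ev_open0 //; apply/implyP; apply: contraTT => nBt.
  have lcevt : etfree_lc (ev_t [::] t) by apply: etfree_lc_ev.
  by case: (xgetI (P := fun d => etfree_lc d /\ ~~ ev_f [:: d] B) (Var 0) (conj lcevt nBt)).
- by move: hAB => /= /implyP; apply.
Qed.

End HerbrandModel.

Fixpoint atoms (A : formula) : seq (nat * seq term) :=
  match A with
  | Atom p ts => [:: (p, ts)]
  | Bot => [::]
  | And A B | Or A B | Imp A B => atoms A ++ atoms B
  end.

Fixpoint skeleton (ats : seq (nat * seq term)) (A : formula) : pform :=
  match A with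
  | Atom p ts => PVar (index (p, ts) ats)
  | Bot => PBot
  | And A B => PAnd (skeleton ats A) (skeleton ats B)
  | Or A B => POr (skeleton ats A) (skeleton ats B)
  | Imp A B => PImp (skeleton ats A) (skeleton ats B)
  end.

Definition atom_inst (ats : seq (nat * seq term)) (n : nat) : formula :=
  nth Bot [seq Atom a.1 a.2 | a <- ats] n.

Lemma lc_atoms k A : lc_f k A -> all (fun a => all (lc_t k) a.2) (atoms A).
Proof.
elim: A => [p ts||A IHA B IHB|A IHA B IHB|A IHA B IHB] //=; first by move->.
all: by case/andP=> /IHA lcA /IHB lcB; rewrite all_cat lcA lcB.
Qed.

Lemma lc_atom_inst ats n : all (fun a => all (lc_t 0) a.2) ats -> lc_f 0 (atom_inst ats n).
Proof.
move=> /all_nthP lcats; rewrite /atom_inst; case: (ltnP n (size ats)) => [ltn|len].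
  by rewrite (nth_map (0, [::])) //=; apply: lcats.
by rewrite nth_default ?size_map.
Qed.

Lemma peval_skeleton ats v A :
  peval v (skeleton ats A) = fval (fun a => v (index a ats)) A.
Proof. by elim: A => //= A -> B ->. Qed.

Lemma inst_skeleton ats A :
  {subset atoms A <= ats} -> inst (atom_inst ats) (skeleton ats A) = A.
Proof.
elim: A => [p ts||A IHA B IHB|A IHA B IHB|A IHA B IHB] //= sub.
  rewrite /atom_inst (nth_map (0, [::])) ?index_mem ?sub ?mem_head //.
  by rewrite nth_index ?sub ?mem_head.
all: by rewrite IHA ?IHB // => a aA; apply: sub; rewrite mem_cat aA ?orbT.
Qed.

Lemma inst_pbigOr s Ps : inst s (pbigOr Ps) = bigOr (map (inst s) Ps).
Proof. by elim: Ps => [|P [|Q Ps] IH] //=; rewrite IH. Qed.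

(* [~F_1 \/ ... \/ ~F_k] is a substitution instance of its propositional
   skeleton, which is a tautology. *)
Lemma prov_bigOr_neg L Fs :
  intermediate L -> (forall A, L (POr (PNeg A) (PNeg (PNeg A)))) ->
  all (lc_f 0) Fs -> (forall V, has (fun F => ~~ fval V F) Fs) ->
  prov L false (bigOr (map Neg Fs)).
Proof.
move=> [L_IPC _ L_MP _] L_wem /allP lcFs unsat.
pose ats := flatten (map atoms Fs).
pose Q := pbigOr (map PNeg (map (skeleton ats) Fs)).
have LQ : L Q.
  apply: L_taut_disj_neg => // v; rewrite peval_pbigOr !has_map.
  apply: sub_has (unsat (fun a => v (index a ats))) => F.
  by rewrite /= peval_skeleton implybF.
have lc_ats : all (fun a => all (lc_t 0) a.2) ats.
  by apply/allP => a /flatten_mapP[F /lcFs /lc_atoms /allP lcF /lcF].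
have := pr_inst false LQ (fun n => lc_atom_inst n lc_ats).
rewrite inst_pbigOr -!map_comp; congr (prov _ _ (bigOr _)).
apply/eq_in_map => F FFs /=; rewrite inst_skeleton // => a aF.
by apply/flatten_mapP; exists F.
Qed.

Section Compactness.
Local Open Scope classical_set_scope.

Lemma chain_bigcup_seq (T : eqType) (F : set (set T)) (c : seq T) :
  total_on F subset -> (forall q, q \in c -> (\bigcup_(Y in F) Y) q) ->
  c = [::] \/ exists2 Y, F Y & forall q, q \in c -> Y q.
Proof.
move=> totF; elim: c => [|q c IH] cF; first by left.
right; have [Z FZ Zq] := cF q (mem_head q c).
have cF' r : r \in c -> (\bigcup_(Y in F) Y) r by move=> rc; apply: cF; rewrite inE rc orbT.
have [->|[Y FY cY]] := IH cF'.
  by exists Z => // r; rewrite inE => /eqP->.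
have [YZ|ZY] := totF Y Z FY FZ.
- by exists Z => // r; rewrite inE => /orP[/eqP->//|/cY/YZ].
- by exists Y => // r; rewrite inE => /orP[/eqP->|/cY//]; apply: ZY.
Qed.

Variables (X : eqType) (S : Type) (sat : (X -> bool) -> S -> bool).
Variable supp : S -> seq X.
Hypothesis sat_local : forall V W s, {in supp s, V =1 W} -> sat V s = sat W s.
Variable Sig : pred S.
Hypothesis finsat : forall l, all Sig l -> exists V, all (sat V) l.

(* Partial valuations are given by their graphs; a maximal extendable one,
   provided by Zorn's lemma, is total. *)
Definition extendable (C : set (X * bool)) : Prop :=
  forall l c, all Sig l -> (forall q, q \in c -> C q) ->
  exists V, all (sat V) l /\ all (fun q => V q.1 == q.2) c.

Lemma extendable_chain F :
  F `<=` extendable -> total_on F subset -> extendable (\bigcup_(Y in F) Y).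
Proof.
move=> Fext totF l c Sigl cF; have [c0|[Y FY cY]] := chain_bigcup_seq totF cF.
  by have [V satV] := finsat Sigl; exists V; rewrite c0.
exact: Fext FY l c Sigl cY.
Qed.

Lemma extendable_add C a : extendable C -> exists b, extendable (C `|` [set (a, b)]).
Proof.
move=> extC; apply: contrapT => /forallNP next.
have /choice[w wP] b : exists w : seq S * seq (X * bool),
    [/\ all Sig w.1, forall q, q \in w.2 -> (C `|` [set (a, b)]) q &
        forall V, all (sat V) w.1 -> ~~ all (fun q => V q.1 == q.2) w.2].
  apply: contrapT => /forallNP nw; apply: (next b) => l c Sigl cC.
  apply: contrapT => /forallNP nV; apply: (nw (l, c)); split => // V satV.
  by apply/negP => agree; apply: (nV V).
pose c := [seq q <- (w true).2 ++ (w false).2 | `[< C q >]].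
have [|q|V [satV agree]] := extC ((w true).1 ++ (w false).1) c.
- by case: (wP true) (wP false) => S1 _ _ [S0 _ _]; rewrite all_cat S1 S0.
- by rewrite mem_filter => /andP[/asboolP].
case: (wP (V a)) => _ wC nagree.
have satVa : all (sat V) (w (V a)).1.
  by move: satV; rewrite all_cat; case: (V a) => /andP[].
move/negP: (nagree V satVa); apply; apply/allP => q qw; case: (wC q qw) => [Cq|/= ->]; last by rewrite eqxx.
apply: (allP agree); rewrite mem_filter asboolT // mem_cat.
by case: (V a) qw => ->; rewrite ?orbT.
Qed.

Lemma maximal_extendable_total A :
  extendable A -> (forall B, A `<` B -> ~ extendable B) -> forall a, exists b, A (a, b).
Proof.
move=> extA maxA a; have [b extAb] := extendable_add a extA.
exists b; apply: contrapT => nAb; apply: (maxA _ _ extAb); split; first exact: subsetUl.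
by move=> /(_ (a, b)) AbA; apply/nAb/AbA; right.
Qed.

Theorem compactness : exists V, forall s, Sig s -> sat V s.
Proof.
have [A [extA maxA]] := Zorn_bigcup extendable_chain.
have /choice[V AV] := maximal_extendable_total extA maxA.
exists V => s Sigs.
have [|q /mapP[a _ ->]//|W [/andP[satW _] agree]] :=
  extA [:: s] [seq (a, V a) | a <- supp s]; first by rewrite /= Sigs.
rewrite (sat_local (W := W)) // => a a_supp.
by apply/esym/eqP; apply: (allP agree (a, V a)); rewrite (map_f (fun a => (a, V a))).
Qed.

End Compactness.

Lemma fval_local V W A : {in atoms A, V =1 W} -> fval V A = fval W A.
Proof.
elim: A => [p ts||A IHA B IHB|A IHA B IHB|A IHA B IHB] //= VW.
  by apply: VW; rewrite mem_head.
all: by rewrite IHA ?IHB // => a aA; apply: VW; rewrite mem_cat aA ?orbT.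
Qed.

Definition admissible (xs : seq nat) (ts : seq term) : bool :=
  (size ts == size xs) && all etfree_t ts && all (lc_t 0) ts.

Lemma lc_sub_list xs ts x : all (lc_t 0) ts -> lc_t 0 (sub_list xs ts x).
Proof.
move=> /all_nthP lcts; rewrite /sub_list; case: ifP => // _.
by case: (ltnP (index x xs) (size ts)) => [/lcts //|le]; rewrite nth_default.
Qed.

Lemma ev_sub_list V xs ts : size ts = size xs ->
  ev_t V [::] \o sub_list xs ts = sub_list xs (map (ev_t V [::]) ts).
Proof.
move=> sz; apply/funext => x; rewrite /sub_list /=; case: ifP => // xxs.
by rewrite (nth_map (Var x)) // sz index_mem.
Qed.

Section Instances.
Variables (A : formula) (xs : seq nat).
Hypotheses (etA : etfree_f A) (lcA : lc_f 0 A).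

Let A_ ts := subst_f (sub_list xs ts) A.

Lemma instances_finsat L :
  intermediate L -> (forall B, L (POr (PNeg B) (PNeg (PNeg B)))) ->
  ~ (exists tss, 0 < size tss /\ all (admissible xs) tss /\
       prov L false (bigOr [seq Neg (A_ ts) | ts <- tss])) ->
  forall tss, all (admissible xs) tss -> exists V, all (fun ts => fval V (A_ ts)) tss.
Proof.
move=> HL L_wem noDisj tss adm; apply: contrapT => /forallNP unsat.
apply: noDisj; exists tss; split; first by case: tss adm unsat => // _ /(_ xpred0).
split=> //; rewrite (map_comp Neg A_); apply: prov_bigOr_neg => // [|V].
  rewrite all_map; apply/allP => ts /(allP adm) /andP[_ lcts].
  exact: lc_subst_etfree.2 _ _ etA lcA (fun x => lc_sub_list xs x lcts).
by rewrite has_map has_predC; apply/negP/unsat.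
Qed.

Lemma instances_model_sound L V es :
  (forall B, L B -> taut B) -> size es = size xs -> all (lc_t 0) es ->
  (forall ts, admissible xs ts -> fval V (A_ ts)) -> ~ prov L true (Neg (A_ es)).
Proof.
move=> L_taut ses lces satV /(prov_sound V L_taut) /=; rewrite implybF => /negP; apply.
rewrite (ev_subst_etfree V).2 // => [|x]; last exact: lc_sub_list.
rewrite ev_sub_list //; apply: satV.
have /allP vs_etfree_lc : all etfree_lc (map (ev_t V [::]) es).
  by apply/allP => _ /mapP[e _ ->]; apply: etfree_lc_ev.
by rewrite /admissible size_map ses eqxx -all_predI; apply/allP.
Qed.

End Instances.

Theorem first_et_thm_neg_of_wem L :
  intermediate L -> (forall A, L (POr (PNeg A) (PNeg (PNeg A)))) -> first_et_thm_neg L.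
Proof.
move=> HL L_wem A xs es etA lcA _ ses _ lces prA; apply: contrapT => noDisj.
pose A_ ts := subst_f (sub_list xs ts) A.
have [V satV] := @compactness _ _ (fun V ts => fval V (A_ ts)) (atoms \o A_)
  (fun V W ts => @fval_local V W (A_ ts)) _ (instances_finsat etA lcA HL L_wem noDisj).
have [_ L_taut _ _] := HL.
exact: (instances_model_sound (V := V) etA lcA L_taut ses lces satV prA).
Qed.

Theorem mainTheorem6 :
  (forall L : pform -> Prop,
      intermediate L ->
      (forall A : pform, L (POr (PNeg A) (PNeg (PNeg A)))) ->
      first_et_thm_neg L)
  /\ first_et_thm_neg KC /\ first_et_thm_neg LC.
Proof.
split; first exact: first_et_thm_neg_of_wem.
split; apply: first_et_thm_neg_of_wem.
- exact: KC_intermediate.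
- exact: KC_wem.
- exact: LC_intermediate.
- exact: LC_wem.
Qed.
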